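(* Let $A$ be an approximately unital Banach algebra such that ${\mathfrak r}_A$ is weak* dense in ${\mathfrak r}_{A^{**}}$. Then $\{x\in{\mathfrak r}_A:\|x\|\le1\}$ is weak* dense in $\{\eta\in{\mathfrak r}_{A^{**}}:\|\eta\|\le1\}$. If in addition there exists a mixed identity of norm $1$ for $A^{**}$ lying in ${\mathfrak r}_{A^{**}}$, then $A$ has a contractive approximate identity in ${\mathfrak r}_A$.
   Context: Banach algebras are complex with submultiplicative norm; ''unital'' means identity of norm 1; approximately unital means having a contractive approximate identity. Multiplier unitization $A^1$: $A$ if unital, otherwise $A+\mathbb{C}1$ with $\|a+\lambda1\|=\sup\{\|ac+\lambda c\|:c\in A,\|c\|\le1\}$. ${\mathfrak r}_A=\{a:\mathrm{Re}\,\varphi(a)\ge0$ for all $\varphi\in(A^1)^*$ with $\|\varphi\|=\varphi(1)=1\}$. Biduals carry the second Arens product; $A^{**}\cong A^{\perp\perp}\subset(A^1)^{**}$; ${\mathfrak r}_{A^{**}}=A^{**}\cap{\mathfrak r}_{(A^1)^{**}}$, where ${\mathfrak r}_{(A^1)^{**}}$ is the set of elements of the unital algebra $(A^1)^{**}$ at which every state has nonnegative real part. A mixed identity for $A^{**}$ is an element that is a right identity for the first Arens product and a left identity for the second Arens product. *)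

From HB Require Import structures.
From mathcomp Require Import all_boot all_order all_algebra.
From mathcomp Require Import boolp classical_sets reals.
From mathcomp.real_closed Require Import complex.

Set Implicit Arguments.
Unset Strict Implicit.
Unset Printing Implicit Defensive.

Import Order.TTheory GRing.Theory Num.Theory.
Local Open Scope ring_scope.
Local Open Scope classical_set_scope.

Section BanachDefs.
Variable R : realType.
Local Notation C := (R[i]).

Definition cabs (z : C) : R := Num.sqrt (complex.Re z ^+ 2 + complex.Im z ^+ 2).
Definition cre (z : C) : R := complex.Re z.

(* A (possibly non-complete) normed complex space, presented concretely:
   a carrier type, a membership predicate (elements of the space are the
   members of the carrier), vector operations and a norm.  Elements of dual
   spaces are represented by functions on the carrier; two such functions
   represent the same functional iff they agree on members. *)
Record nspace := NSpace {
  ns_car : Type;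
  ns_in : ns_car -> Prop;
  ns_add : ns_car -> ns_car -> ns_car;
  ns_scale : C -> ns_car -> ns_car;
  ns_norm : ns_car -> R }.
Arguments ns_in : clear implicits.
Arguments ns_add : clear implicits.
Arguments ns_scale : clear implicits.
Arguments ns_norm : clear implicits.

Definition is_blf (X : nspace) (f : ns_car X -> C) : Prop :=
  (forall (a : C) x y, ns_in X x -> ns_in X y ->
      f (ns_add X (ns_scale X a x) y) = a * f x + f y) /\
  (exists M : R, forall x, ns_in X x -> cabs (f x) <= M * ns_norm X x).

Definition dual_norm (X : nspace) (f : ns_car X -> C) : R :=
  sup [set r | exists x, [/\ ns_in X x, ns_norm X x <= 1 & r = cabs (f x)]].

Definition dual (X : nspace) : nspace :=
  @NSpace (ns_car X -> C) (@is_blf X)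
    (fun f g x => f x + g x) (fun a f x => a * f x) (@dual_norm X).

Definition canon (X : nspace) (x : ns_car X) : ns_car (dual (dual X)) :=
  fun f => f x.

Definition is_state (X : nspace) (one : ns_car X) (f : ns_car X -> C) : Prop :=
  [/\ is_blf f, dual_norm f = 1 & f one = 1].

Definition rset (X : nspace) (one : ns_car X) (x : ns_car X) : Prop :=
  ns_in X x /\ forall f, is_state one f -> 0 <= cre (f x).

Variables (V : lmodType C) (mul : V -> V -> V) (nrm : V -> R).

Definition is_banach_algebra : Prop :=
  (forall x y z, mul x (mul y z) = mul (mul x y) z) /\
  (forall (a : C) x y z, mul (a *: x + y) z = a *: mul x z + mul y z) /\
  (forall (a : C) x y z, mul z (a *: x + y) = a *: mul z x + mul z y) /\
  (forall x, 0 <= nrm x) /\ (forall x, nrm x = 0 -> x = 0) /\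
  (forall x y, nrm (x + y) <= nrm x + nrm y) /\
  (forall (a : C) x, nrm (a *: x) = cabs a * nrm x) /\
  (forall x y, nrm (mul x y) <= nrm x * nrm y) /\
  (forall u : nat -> V,
    (forall eps : R, 0 < eps -> exists N : nat, forall m n : nat,
        (N <= m)%N -> (N <= n)%N -> nrm (u m - u n) < eps) ->
    exists l : V, forall eps : R, 0 < eps -> exists N : nat,
        forall n : nat, (N <= n)%N -> nrm (u n - l) < eps).

Definition is_identity (u : V) : Prop :=
  (forall a, mul u a = a /\ mul a u = a) /\ nrm u = 1.

Definition unital : Prop := exists u, is_identity u.

Definition directed (I : Type) (le : I -> I -> Prop) : Prop :=
  [/\ inhabited I, (forall i, le i i),
      (forall i j k, le i j -> le j k -> le i k) &
      forall i j, exists k, le i k /\ le j k].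

Definition net_cvg (I : Type) (le : I -> I -> Prop) (x : I -> V) (l : V) :=
  forall eps : R, 0 < eps -> exists i0, forall i, le i0 i -> nrm (x i - l) < eps.

Definition has_cai_in (S : V -> Prop) : Prop :=
  exists (I : Type) (le : I -> I -> Prop) (e : I -> V),
    [/\ directed le,
        (forall i, S (e i) /\ nrm (e i) <= 1) &
        forall a, net_cvg le (fun i => mul (e i) a) a /\
                  net_cvg le (fun i => mul a (e i)) a].

Definition approx_unital : Prop := has_cai_in (fun _ => True).

Definition spaceA : nspace :=
  @NSpace V (fun _ => True) (fun x y => x + y) (fun a x => a *: x) nrm.

(* A + C1 with the multiplier norm (the unitization when A is nonunital) *)
Definition mult_norm (p : V * C) : R :=
  sup [set r | exists c, nrm c <= 1 /\ r = nrm (mul p.1 c + p.2 *: c)].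

Definition spaceA1 : nspace :=
  @NSpace (V * C)%type (fun _ => True)
    (fun p q => (p.1 + q.1, p.2 + q.2)) (fun a p => (a *: p.1, a * p.2))
    mult_norm.

Definition A1_one : V * C := (0, 1).
Definition A1_incl (a : V) : V * C := (a, 0).

(* r_A : computed in the multiplier unitization A^1 (= A if A unital) *)
Definition rA (a : V) : Prop :=
  (forall u, is_identity u -> rset (X := spaceA) u a) /\
  (~ unital -> rset (X := spaceA1) A1_one (A1_incl a)).

Definition Adual := dual spaceA.
Definition Abidual := dual Adual.
Definition in_bidual (eta : ns_car Abidual) : Prop := ns_in Abidual eta.
Definition bidual_norm (eta : ns_car Abidual) : R := ns_norm Abidual eta.

(* embedding A^** = A^{perp perp} into (A^1)^** *)
Definition bidual_to_A1 (eta : ns_car Abidual) : ns_car (dual (dual spaceA1)) :=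
  fun psi => eta (fun a => psi (A1_incl a)).

(* r_{A^**} = A^** \cap r_{(A^1)^**} *)
Definition rA2 (eta : ns_car Abidual) : Prop :=
  in_bidual eta /\
  (forall u, is_identity u -> rset (X := Abidual) (canon (X := spaceA) u) eta) /\
  (~ unital ->
     rset (X := dual (dual spaceA1)) (canon (X := spaceA1) A1_one)
          (bidual_to_A1 eta)).

Definition fa (f : V -> C) (a : V) : V -> C := fun b => f (mul a b).
Definition af (a : V) (f : V -> C) : V -> C := fun b => f (mul b a).
Definition Phif (Phi : ns_car Abidual) (f : V -> C) : V -> C :=
  fun a => Phi (fa f a).
Definition fPhi (f : V -> C) (Phi : ns_car Abidual) : V -> C :=
  fun a => Phi (af a f).
Definition arens1 (Phi Psi : ns_car Abidual) : ns_car Abidual :=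
  fun f => Phi (Phif Psi f).
Definition arens2 (Phi Psi : ns_car Abidual) : ns_car Abidual :=
  fun f => Psi (fPhi f Phi).

(* mixed identity: right identity for the first Arens product and left
   identity for the second (equalities in A^** = agreement on A^* ) *)
Definition mixed_identity (E : ns_car Abidual) : Prop :=
  in_bidual E /\
  forall Phi, in_bidual Phi -> forall f, is_blf (X := spaceA) f ->
    arens1 Phi E f = Phi f /\ arens2 E Phi f = Phi f.

(* weak* density: every element of T lies in the sigma(A^**, A^* )-closure of
   the canonical image of S (basic weak* neighbourhoods). *)
Definition wstar_dense_in (S : V -> Prop) (T : ns_car Abidual -> Prop) : Prop :=
  forall eta, T eta ->
  forall (n : nat) (fs : 'I_n -> (V -> C)) (eps : R),
    (forall i, is_blf (X := spaceA) (fs i)) -> 0 < eps ->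
    exists x, S x /\ forall i, cabs (eta (fs i) - fs i x) < eps.

End BanachDefs.

Arguments in_bidual {R V} nrm eta.
Arguments bidual_norm {R V} nrm eta.
Arguments bidual_to_A1 {R V} mul nrm eta psi.
Arguments rA2 {R V} mul nrm eta.
Arguments mixed_identity {R V} mul nrm E.
Arguments wstar_dense_in {R V} nrm S T.

(* Both parts are Hahn-Banach separation arguments, carried out in finite products
   of C or of A so that only finitely many functionals of A* are involved.
   Density of the balls: if eta in the unit ball of r_{A**} were not in the weak*
   closure of the (convex) unit ball of r_A, a separation in C^n would give f in A*
   and eps > 0 with Re f x + eps <= Re eta(f) on that ball.  By homogeneity
   Re f <= s ||.|| on the cone r_A, where s = Re eta(f) - eps, and a second
   Hahn-Banach step splits f = g + h with Re g <= 0 on r_A and ||h|| <= s.  Density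
   of r_A in r_{A**} gives Re eta(g) <= 0 and ||eta|| <= 1 gives Re eta(h) <= s,
   a contradiction.
   Approximate identity: a mixed identity E satisfies E(h(a .)) = E(h(. a)) = h(a),
   so weak* approximation of E by the unit ball of r_A makes x a - a and a x - a
   weakly small; as that ball is convex, a separation in a finite power of A
   (Mazur's lemma) makes them small in norm, and these approximate units form a
   contractive approximate identity. *)

From Pilot Require Import Defs.
From HB Require Import structures.
From mathcomp Require Import all_boot all_order all_algebra.
From mathcomp Require Import boolp classical_sets reals.
From mathcomp.real_closed Require Import complex.
From mathcomp Require Import ring lra.

Set Implicit Arguments.
Unset Strict Implicit.
Unset Printing Implicit Defensive.

Import Order.TTheory GRing.Theory Num.Theory.
Local Open Scope ring_scope.
Local Open Scope complex_scope.
Local Open Scope classical_set_scope.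

Section InfBounds.
Variable R : realType.
Implicit Types (S T : set R) (c : R).

Lemma le_inf_add S T c : S !=set0 -> T !=set0 ->
  (forall a b, S a -> T b -> c <= a + b) -> c <= inf S + inf T.
Proof.
move=> S0 T0 hST; rewrite -lerBlDr; apply: lb_le_inf => // b Tb.
rewrite lerBlDr addrC -lerBlDr; apply: lb_le_inf => // a Sa.
by rewrite lerBlDr addrC; apply: hST.
Qed.

End InfBounds.

Section RealHahnBanach.
Variables (R : realType) (X : lmodType R[i]).
Implicit Types (p q N psi : X -> R) (x y c w : X) (t r : R).

Definition sublinear p :=
  (forall x y, p (x + y) <= p x + p y) /\
  (forall t x, 0 <= t -> p (t%:C *: x) = t * p x).

Definition real_linear psi :=
  (forall x y, psi (x + y) = psi x + psi y) /\
  (forall t x, psi (t%:C *: x) = t * psi x).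

(* [Q c r] reads "(c, r) lies in a convex cone of X * R" *)
Definition real_cone_rel (Q : X -> R -> Prop) :=
  [/\ Q 0 0, (forall c1 r1 c2 r2, Q c1 r1 -> Q c2 r2 -> Q (c1 + c2) (r1 + r2))
    & forall t c r, 0 <= t -> Q c r -> Q (t%:C *: c) (t * r)].

Lemma sublinear0 p : sublinear p -> p 0 = 0.
Proof. by case=> _ pZ; have := pZ 0 0 (lexx _); rewrite scaler0 mul0r. Qed.

Lemma sublinear_geN p x : sublinear p -> - p (- x) <= p x.
Proof.
move=> sp; have := sp.1 x (- x).
by rewrite subrr sublinear0 // -lerBlDr sub0r.
Qed.

Lemma sublinear_of_scale_le p :
  (forall x y, p (x + y) <= p x + p y) -> p 0 = 0 ->
  (forall t x, 0 < t -> p (t%:C *: x) <= t * p x) -> sublinear p.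
Proof.
move=> pD p0 pZ; split=> // t x; rewrite le_eqVlt => /predU1P[<-|t0].
  by rewrite scale0r mul0r.
apply/le_anti; rewrite pZ //=.
have tK : t^-1%:C *: (t%:C *: x) = x.
  by rewrite scalerA -rmorphM mulVf ?gt_eqF // scale1r.
by rewrite -{1}tK -ler_pdivlMl //; apply: pZ; rewrite invr_gt0.
Qed.

Lemma real_linear0 psi : real_linear psi -> psi 0 = 0.
Proof. by case=> _ psiZ; have := psiZ 0 0; rewrite scaler0 mul0r. Qed.

Lemma real_linearN psi x : real_linear psi -> psi (- x) = - psi x.
Proof.
move=> lpsi; apply/eqP; rewrite -addr_eq0 -lpsi.1 addNr.
exact/eqP/real_linear0.
Qed.

Section ConeInf.
Variables (N : X -> R) (Q : X -> R -> Prop).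
Hypotheses (sN : sublinear N) (cQ : real_cone_rel Q)
  (QN : forall c r, Q c r -> r <= N c).

(* every real-linear minorant psi of cone_inf satisfies r <= psi c on Q *)
Definition cone_inf w :=
  inf [set N (w + cr.1) - cr.2 | cr in [set cr : X * R | Q cr.1 cr.2]].

Let cone_set_neq0 w :
  [set N (w + cr.1) - cr.2 | cr in [set cr : X * R | Q cr.1 cr.2]] !=set0.
Proof. by case: cQ => Q00 _ _; exists (N (w + 0) - 0), (0, 0). Qed.

Lemma cone_inf_le w c r : Q c r -> cone_inf w <= N (w + c) - r.
Proof.
move=> Qcr; apply: ge_inf; last by exists (c, r).
exists (- N (- w)) => _ [[c' r'] /= /QN Qr' <-].
by have := sN.1 (w + c') (- w); rewrite addrAC subrr add0r; lra.
Qed.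

Lemma le_cone_inf w z :
  (forall c r, Q c r -> z <= N (w + c) - r) -> z <= cone_inf w.
Proof.
by move=> hz; apply: (lb_le_inf (cone_set_neq0 w)) => _ [[c r] /= Qcr <-]; apply: hz.
Qed.

Lemma cone_inf_leN w : cone_inf w <= N w.
Proof. by case: cQ => Q00 _ _; have := cone_inf_le w Q00; rewrite addr0 subr0. Qed.

Lemma cone_inf_oppr_le c r : Q c r -> cone_inf (- c) <= - r.
Proof. by move=> /(cone_inf_le (- c)); rewrite addNr sublinear0 // sub0r. Qed.

Lemma cone_inf_sublinear : sublinear cone_inf.
Proof.
case: cQ => Q00 QD QZ; apply: sublinear_of_scale_le.
- move=> w1 w2; apply: le_inf_add (cone_set_neq0 _) (cone_set_neq0 _) _.
  move=> _ _ [[c1 r1] /= Q1 <-] [[c2 r2] /= Q2 <-].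
  apply: le_trans (cone_inf_le _ (QD _ _ _ _ Q1 Q2)) _.
  by have := sN.1 (w1 + c1) (w2 + c2); rewrite addrACA; lra.
- apply/le_anti/andP; split; first by rewrite -(sublinear0 sN) cone_inf_leN.
  by apply: le_cone_inf => c r /QN; rewrite add0r subr_ge0.
move=> t w t0; rewrite mulrC -ler_pdivrMr //; apply: le_cone_inf => c r Qcr.
rewrite ler_pdivrMr // mulrC.
apply: le_trans (cone_inf_le _ (QZ _ _ _ (ltW t0) Qcr)) _.
by rewrite -scalerDr sN.2 ?mulrBr // ltW.
Qed.

End ConeInf.

Section ChainInf.
Variables (I : Type) (A : set I) (q : I -> X -> R) (P : X -> R).
Hypotheses (A0 : A !=set0)
  (sq : forall i, A i -> sublinear (q i)) (qP : forall i x, A i -> q i x <= P x)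
  (totA : forall i j, A i -> A j ->
     (forall x, q i x <= q j x) \/ (forall x, q j x <= q i x)).

Definition chain_inf x := inf [set q i x | i in A].

Lemma chain_inf_le i x : A i -> chain_inf x <= q i x.
Proof.
move=> Ai; apply: ge_inf; last by exists i.
exists (- P (- x)) => _ [j Aj <-]; apply: le_trans (sublinear_geN x (sq Aj)).
by rewrite lerN2 qP.
Qed.

Lemma le_chain_inf x z : (forall i, A i -> z <= q i x) -> z <= chain_inf x.
Proof.
move=> hz; apply: lb_le_inf => [|_ [i Ai <-]]; last exact: hz.
by case: A0 => i Ai; exists (q i x), i.
Qed.

Lemma chain_inf_sublinear : sublinear chain_inf.
Proof.
have [i0 Ai0] := A0; have qne x : [set q i x | i in A] !=set0 by exists (q i0 x), i0.
apply: sublinear_of_scale_le.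
- move=> x y; apply: le_inf_add => // _ _ [i Ai <-] [j Aj <-].
  have [ij|ji] := totA Ai Aj.
  + apply: le_trans (chain_inf_le _ Ai) _; apply: le_trans ((sq Ai).1 x y) _.
    by rewrite lerD2l ij.
  + apply: le_trans (chain_inf_le _ Aj) _; apply: le_trans ((sq Aj).1 x y) _.
    by rewrite lerD2r ji.
- apply/le_anti; apply/andP; split.
    by apply: le_trans (chain_inf_le _ Ai0) _; rewrite (sublinear0 (sq Ai0)).
  by apply: le_chain_inf => i Ai; rewrite (sublinear0 (sq Ai)).
move=> t x t0; rewrite mulrC -ler_pdivrMr //; apply: le_chain_inf => i Ai.
rewrite ler_pdivrMr // mulrC -(sq Ai).2; [exact: chain_inf_le | exact: ltW].
Qed.

End ChainInf.

Lemma minimal_sublinear_linear q : sublinear q ->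
  (forall q', sublinear q' -> (forall x, q' x <= q x) -> forall x, q x <= q' x) ->
  real_linear q.
Proof.
move=> sq qmin.
(* by minimality q coincides with the infimal convolution of q along the ray
   through y, which gives q (- y) <= - q y *)
have qN y : q (- y) = - q y.
  pose Qy c r := exists2 t, 0 <= t & c = t%:C *: y /\ r = t * q y.
  have cQy : real_cone_rel Qy.
    split; first by exists 0; rewrite ?scale0r ?mul0r.
      move=> _ _ _ _ [t1 t1p [-> ->]] [t2 t2p [-> ->]].
      by exists (t1 + t2); rewrite ?addr_ge0 // rmorphD scalerDl mulrDl.
    move=> s _ _ s0 [t tp [-> ->]].
    by exists (s * t); rewrite ?mulr_ge0 // rmorphM scalerA mulrA.
  have QyN c r : Qy c r -> r <= q c by case=> t tp [-> ->]; rewrite sq.2.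
  apply/le_anti/andP; split; last by rewrite -lerN2 opprK sublinear_geN.
  apply: le_trans (qmin _ (cone_inf_sublinear sq cQy QyN)
    (cone_inf_leN sq cQy QyN) (- y)) _.
  by apply: (cone_inf_oppr_le sq QyN); exists 1; rewrite ?scale1r ?mul1r.
split=> [x y|t x].
  apply/le_anti/andP; split; first exact: sq.1.
  by have := sq.1 (- x) (- y); rewrite -opprD !qN; lra.
have [t0|t0] := leP 0 t; first exact: sq.2.
rewrite -[t]opprK rmorphN scaleNr qN sq.2 ?mulNr // oppr_ge0 ltW //.
Qed.

Theorem hahn_banach P : sublinear P ->
  exists psi, real_linear psi /\ forall x, psi x <= P x.
Proof.
move=> sP.
pose T := {q : X -> R | sublinear q /\ forall x, q x <= P x}.
pose below (s t : T) := `[< forall x, sval t x <= sval s x >].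
have [[q [sq qP]] qmax] : exists q : T, premaximal below q.
  apply: (ZL_preorder (exist _ P (conj sP (fun x => lexx _)))).
  - by move=> t; apply/asboolP.
  - move=> r s t /asboolP rs /asboolP st; apply/asboolP => x.
    exact: le_trans (st x) (rs x).
  move=> A totA; have [A0|A0] := pselect (A !=set0); last first.
    by exists (exist _ P (conj sP (fun x => lexx _))) => s As; case: A0; exists s.
  have [t0 At0] := A0.
  have sA (t : T) : A t -> sublinear (sval t) by case: t => ? [].
  have PA (t : T) x : A t -> sval t x <= P x by case: t => ? [].
  have totA' (u v : T) : A u -> A v ->
      (forall x, sval u x <= sval v x) \/ (forall x, sval v x <= sval u x).
    by move=> Au Av; case: (totA u v Au Av) => /asboolP; [right|left].
  have sm := chain_inf_sublinear A0 sA PA totA'.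
  have mP x : chain_inf A sval x <= P x.
    exact: le_trans (chain_inf_le sA PA x At0) (PA _ x At0).
  exists (exist (fun q => sublinear q /\ forall x, q x <= P x) _ (conj sm mP)).
  by move=> s As; apply/asboolP => x /=; exact: (chain_inf_le sA PA).
exists q; split=> //; apply: minimal_sublinear_linear => // q' sq' q'q.
have q'P x : q' x <= P x := le_trans (q'q x) (qP x).
have /qmax /asboolP // : below (exist _ q (conj sq qP)) (exist _ q' (conj sq' q'P)).
exact/asboolP.
Qed.

Theorem hahn_banach_cone N (Q : X -> R -> Prop) :
  sublinear N -> real_cone_rel Q -> (forall c r, Q c r -> r <= N c) ->
  exists psi, [/\ real_linear psi, forall x, psi x <= N x
                & forall c r, Q c r -> r <= psi c].
Proof.
move=> sN cQ QN.
have [psi [lpsi psiP]] := hahn_banach (cone_inf_sublinear sN cQ QN).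
exists psi; split=> // [x|c r Qcr].
  exact: le_trans (psiP x) (cone_inf_leN sN cQ QN x).
rewrite -lerN2 -real_linearN //.
exact: le_trans (psiP (- c)) (cone_inf_oppr_le sN QN Qcr).
Qed.

Definition convex_set (K : X -> Prop) :=
  forall k1 k2 l, 0 <= l <= 1 -> K k1 -> K k2 ->
    K (l%:C *: k1 + (1 - l)%:C *: k2).

Definition real_cone (S : X -> Prop) :=
  [/\ S 0, forall x y, S x -> S y -> S (x + y)
     & forall t x, 0 <= t -> S x -> S (t%:C *: x)].

Definition cone_over (K : X -> Prop) d c r :=
  c = 0 /\ r = 0 \/ exists t k, [/\ 0 < t, K k, c = t%:C *: k & r = t * d].

Lemma cone_over_real_cone K d : convex_set K -> real_cone_rel (cone_over K d).
Proof.
move=> cK; split; first by left.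
  move=> c1 r1 c2 r2 [[-> ->]|[t1 [k1 [t1p K1 -> ->]]]]; first by rewrite !add0r.
  move=> [[-> ->]|[t2 [k2 [t2p K2 -> ->]]]]; first by rewrite !addr0; right; exists t1, k1.
  have tp : 0 < t1 + t2 := addr_gt0 t1p t2p.
  have tn0 : t1 + t2 != 0 by rewrite gt_eqF.
  pose l := t1 / (t1 + t2); have l1 : 1 - l = t2 / (t1 + t2).
    by rewrite -[1](divff tn0) -mulrBl addrC addKr.
  right; exists (t1 + t2), (l%:C *: k1 + (1 - l)%:C *: k2); split=> //.
  - apply: cK => //; rewrite /l divr_ge0 ?(ltW t1p) ?(ltW tp) //=.
    by rewrite ler_pdivrMr // mul1r lerDl ltW.
  - by rewrite /l l1 scalerDr !scalerA -!rmorphM !(mulrC (t1 + t2)) !divfK.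
  - by rewrite mulrDl.
move=> s c r s0 [[-> ->]|[t [k [tp Kk -> ->]]]]; first by left; rewrite scaler0 mulr0.
have [->|sp] := eqVneq s 0; first by left; rewrite scale0r mul0r.
have s_gt0 : 0 < s by rewrite lt_def sp.
by right; exists (s * t), k; rewrite mulr_gt0 // rmorphM scalerA mulrA.
Qed.

Theorem hahn_banach_convex N (K : X -> Prop) d :
  sublinear N -> convex_set K -> (forall k, K k -> d <= N k) ->
  exists psi, [/\ real_linear psi, forall x, psi x <= N x
                & forall k, K k -> d <= psi k].
Proof.
move=> sN cK KN.
have QN c r : cone_over K d c r -> r <= N c.
  case=> [[-> ->]|[t [k [tp Kk -> ->]]]]; first by rewrite sublinear0.
  by rewrite (sN.2 _ _ (ltW tp)) ler_pM2l ?KN.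
have [psi [lpsi psiN psiQ]] := hahn_banach_cone sN (cone_over_real_cone d cK) QN.
exists psi; split=> // k Kk; rewrite -[d]mul1r -[k]scale1r -(rmorph1 (real_complex R)).
by apply: psiQ; right; exists 1, k.
Qed.

End RealHahnBanach.

Definition real_affine (R : realType) (U U' : lmodType R[i]) (T : U -> U') :=
  forall x1 x2 l, T (l%:C *: x1 + (1 - l)%:C *: x2) = l%:C *: T x1 + (1 - l)%:C *: T x2.

Section ComplexModulus.
Variable R : realType.
Implicit Types (z w : R[i]) (t : R).

Lemma cabsE z : (cabs z)%:C = `|z|.
Proof. by rewrite normc_def. Qed.

Lemma cabs_ge0 z : 0 <= cabs z.
Proof. exact: sqrtr_ge0. Qed.

Lemma cabsM z w : cabs (z * w) = cabs z * cabs w.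
Proof. by have := normrM z w; rewrite -!cabsE -rmorphM => /complexI. Qed.

Lemma cabsD z w : cabs (z + w) <= cabs z + cabs w.
Proof. by have := ler_normD z w; rewrite -!cabsE -rmorphD lecR. Qed.

Lemma cabsN z : cabs (- z) = cabs z.
Proof. by have := normrN z; rewrite -!cabsE => /complexI. Qed.

Lemma cabs0 : cabs (0 : R[i]) = 0.
Proof. by apply: complexI; rewrite cabsE normr0. Qed.

Lemma cabs_le0 z : cabs z <= 0 -> z = 0.
Proof.
move=> z0; apply/normr0_eq0; rewrite -cabsE.
by have -> : cabs z = 0 by apply/le_anti; rewrite z0 cabs_ge0.
Qed.

Lemma cabsR t : 0 <= t -> cabs t%:C = t.
Proof. by move=> t0; apply: complexI; rewrite cabsE ger0_norm ?lecR. Qed.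

Lemma cre_le_cabs z : cre z <= cabs z.
Proof.
rewrite /cre /cabs; apply: le_trans (ler_norm _) _.
rewrite -sqrtr_sqr ler_sqrt ?lerDl ?sqr_ge0 //.
by rewrite addr_ge0 ?sqr_ge0.
Qed.

Lemma creD z w : cre (z + w) = cre z + cre w.
Proof. exact: raddfD. Qed.

Lemma creN z : cre (- z) = - cre z.
Proof. exact: raddfN. Qed.

Lemma cre_sum (I : finType) (F : I -> R[i]) : cre (\sum_i F i) = \sum_i cre (F i).
Proof. exact: raddf_sum. Qed.

Lemma creMr t z : cre (t%:C * z) = t * cre z.
Proof. by case: z => a b; rewrite /cre /= mul0r subr0. Qed.

End ComplexModulus.

Section Seminorm.
Variables (R : realType) (W : lmodType R[i]) (nW : W -> R).
Hypotheses (nWD : forall x y, nW (x + y) <= nW x + nW y)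
  (nWZ : forall a x, nW (a *: x) = cabs a * nW x).
Implicit Types (x y : W) (t s : R).

Lemma seminorm0 : nW 0 = 0.
Proof. by have := nWZ 0 0; rewrite scaler0 cabs0 mul0r. Qed.

Lemma seminormN x : nW (- x) = nW x.
Proof. by rewrite -scaleN1r nWZ cabsN cabsR ?ler01 // mul1r. Qed.

Lemma seminorm_ge0 x : 0 <= nW x.
Proof. by have := nWD x (- x); rewrite subrr seminorm0 seminormN; lra. Qed.

Lemma complexify psi s : real_linear psi -> (forall x, psi x <= s * nW x) ->
  exists h : W -> R[i], [/\ forall a x y, h (a *: x + y) = a * h x + h y,
    forall x, cre (h x) = psi x & forall x, cabs (h x) <= s * nW x].
Proof.
move=> lpsi psiP; have [psiD psiZ] := lpsi.
(* the imaginary part of h is read off from Im z = - Re ('i * z) *)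
pose h x := psi x +i* (- psi ('i *: x)).
have hD x y : h (x + y) = h x + h y by rewrite /h scalerDr !psiD opprD.
have psi_scale al be x :
    psi ((al +i* be) *: x) = al * psi x + be * psi ('i *: x).
  have -> : al +i* be = al%:C + be%:C * 'i.
    by apply/eqP; rewrite eq_complex /=; apply/andP; split; apply/eqP; ring.
  by rewrite scalerDl -(scalerA be%:C 'i x) psiD !psiZ.
have psi_iscale al be x :
    psi ('i *: ((al +i* be) *: x)) = - be * psi x + al * psi ('i *: x).
  rewrite scalerA; have -> : 'i * (al +i* be) = (- be) +i* al.
    by apply/eqP; rewrite eq_complex /=; apply/andP; split; apply/eqP; ring.
  exact: psi_scale.
have hZ a x : h (a *: x) = a * h x.
  case: a => al be; rewrite /h psi_iscale psi_scale.
  by apply/eqP; rewrite eq_complex /=; apply/andP; split; apply/eqP; ring.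
exists h; split=> // [a x y|x]; first by rewrite hD hZ.
set z := h x; have [->|zn0] := eqVneq z 0.
  rewrite cabs0; have := psiP x; have := psiP (- x).
  by rewrite real_linearN // seminormN; lra.
(* rotate x so that h takes the real value |h x| there *)
pose w := `|z| / z.
have wz : w * z = (cabs z)%:C by rewrite /w divfK // cabsE.
have cw : cabs w = 1.
  by apply: complexI; rewrite cabsE /w normrM normfV normr_id mulfV ?normr_eq0.
by have := psiP (w *: x); rewrite nWZ cw mul1r -[psi _]/(cre (h (w *: x))) hZ wz.
Qed.

Section FiniteFamilies.
Variable I : finType.

Definition sum_seminorm (w : {ffun I -> W}) := \sum_i nW (w i).

Definition ffun_single (i : I) x : {ffun I -> W} := [ffun j => if j == i then x else 0].

Lemma sum_ffun_single (w : {ffun I -> W}) : \sum_i ffun_single i (w i) = w.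
Proof.
apply/ffunP => j; rewrite sum_ffunE (bigD1 j) //= ffunE eqxx big1 ?addr0 //.
by move=> i ij; rewrite ffunE eq_sym (negbTE ij).
Qed.

Lemma ffun_singleD i x y : ffun_single i (x + y) = ffun_single i x + ffun_single i y.
Proof. by apply/ffunP => j; rewrite !ffunE; case: eqP; rewrite ?addr0. Qed.

Lemma ffun_singleZ i a x : ffun_single i (a *: x) = a *: ffun_single i x.
Proof. by apply/ffunP => j; rewrite !ffunE; case: eqP; rewrite ?scaler0. Qed.

Lemma sum_seminorm_sublinear : sublinear sum_seminorm.
Proof.
split=> [w1 w2|t w t0]; last first.
  by rewrite /sum_seminorm mulr_sumr; apply: eq_bigr => i _; rewrite ffunE nWZ cabsR.
by rewrite /sum_seminorm -big_split; apply: ler_sum => i _; rewrite ffunE.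
Qed.

Lemma sum_seminorm_single i x : sum_seminorm (ffun_single i x) = nW x.
Proof.
rewrite /sum_seminorm (bigD1 i) //= ffunE eqxx big1 ?addr0 // => j /negbTE ji.
by rewrite ffunE ji seminorm0.
Qed.

Theorem ffun_separation (K : {ffun I -> W} -> Prop) d :
  convex_set K -> (forall k, K k -> exists i, d <= nW (k i)) ->
  exists h : I -> W -> R[i],
    [/\ forall i a x y, h i (a *: x + y) = a * h i x + h i y,
        forall i x, cabs (h i x) <= nW x
      & forall k, K k -> d <= cre (\sum_i h i (k i))].
Proof.
move=> cK Kd.
have KN k : K k -> d <= sum_seminorm k.
  move=> /Kd [i /le_trans]; apply; rewrite /sum_seminorm (bigD1 i) //= lerDl.
  by rewrite sumr_ge0 // => j _; apply: seminorm_ge0.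
have [psi [[psiD psiZ] psiN psiK]] :=
  hahn_banach_convex sum_seminorm_sublinear cK KN.
have hex i : exists h : W -> R[i],
    [/\ forall a x y, h (a *: x + y) = a * h x + h y,
      forall x, cre (h x) = psi (ffun_single i x) & forall x, cabs (h x) <= 1 * nW x].
  apply: complexify.
  - by split=> [x y|t x]; rewrite ?ffun_singleD ?ffun_singleZ ?psiD ?psiZ.
  - by move=> x; rewrite mul1r -(sum_seminorm_single i).
have [h hP] := choice hex.
exists h; split=> [i|i x|k Kk]; first by case: (hP i).
  by case: (hP i) => _ _ /(_ x); rewrite mul1r.
have hRe i x : cre (h i x) = psi (ffun_single i x) by case: (hP i).
rewrite cre_sum; under eq_bigr => i _ do rewrite hRe.
have psi0 : psi 0 = 0 by apply: (real_linear0 (conj psiD psiZ)).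
by rewrite -(big_morph psi psiD psi0) sum_ffun_single psiK.
Qed.

Corollary ffun_separation_image (U : lmodType R[i]) (S : U -> Prop)
    (T : U -> {ffun I -> W}) d :
  convex_set S -> real_affine T -> (forall u, S u -> exists i, d <= nW (T u i)) ->
  exists h : I -> W -> R[i],
    [/\ forall i a x y, h i (a *: x + y) = a * h i x + h i y,
        forall i x, cabs (h i x) <= nW x
      & forall u, S u -> d <= cre (\sum_i h i (T u i))].
Proof.
move=> cS aT Sd.
have cK : convex_set (fun w => exists2 u, S u & w = T u).
  move=> _ _ l l01 [u1 S1 ->] [u2 S2 ->]; rewrite -(aT u1 u2 l).
  by exists (l%:C *: u1 + (1 - l)%:C *: u2); first exact: cS.
have Kd w : (exists2 u, S u & w = T u) -> exists i, d <= nW (w i).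
  by case=> u /Sd ? ->.
have [h [hL hb hK]] := ffun_separation cK Kd.
by exists h; split=> // u Su; apply: hK; exists u.
Qed.

End FiniteFamilies.

End Seminorm.

Section DualNorm.
Variables (R : realType) (X : nspace R).
Implicit Types (x y : ns_car X) (f : ns_car X -> R[i]).

Lemma cabs_le_dual_norm f x M :
  (forall y, ns_in y -> cabs (f y) <= M * ns_norm y) ->
  (forall y, ns_in y -> 0 <= ns_norm y) ->
  ns_in x -> ns_norm x <= 1 -> cabs (f x) <= dual_norm f.
Proof.
move=> fM n_ge0 xX x1; apply: ub_le_sup; last by exists x.
exists `|M| => _ [y [yX y1 ->]]; apply: le_trans (fM _ yX) _.
apply: le_trans (ler_wpM2r (n_ge0 _ yX) (ler_norm M)) _.
by rewrite -[leRHS]mulr1 ler_wpM2l.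
Qed.

Lemma dual_norm_le f x0 s :
  ns_in x0 -> ns_norm x0 <= 1 ->
  (forall y, ns_in y -> ns_norm y <= 1 -> cabs (f y) <= s) ->
  dual_norm f <= s.
Proof.
move=> x0X x01 fs; apply: ge_sup; first by exists (cabs (f x0)), x0.
by move=> _ [y [yX y1 ->]]; apply: fs.
Qed.

End DualNorm.

Section WeakStarDensity.
Variables (R : realType) (V : lmodType R[i]) (nrm : V -> R).
Hypotheses (nrmD : forall x y, nrm (x + y) <= nrm x + nrm y)
  (nrmZ : forall a x, nrm (a *: x) = cabs a * nrm x).
Implicit Types (x y : V) (f g h : V -> R[i]) (S : V -> Prop) (eta : ns_car (Abidual nrm)).

Local Notation blf f := (is_blf (X := spaceA nrm) f).
Local Notation dnorm f := (dual_norm (X := spaceA nrm) f).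

Let nrm0 := seminorm0 nrmZ.
Let nrm_ge0 := seminorm_ge0 nrmD nrmZ.

Lemma blfL f a x y : blf f -> f (a *: x + y) = a * f x + f y.
Proof. by case=> fL _; apply: fL. Qed.

Lemma blf0 f : blf f -> f 0 = 0.
Proof.
move=> bf; apply: (addrI (f 0)).
by have := blfL 1 0 0 bf; rewrite scaler0 !addr0 mul1r => <-.
Qed.

Lemma blfD f x y : blf f -> f (x + y) = f x + f y.
Proof. by move=> bf; rewrite -[x]scale1r blfL // mul1r scale1r. Qed.

Lemma blfZ f a x : blf f -> f (a *: x) = a * f x.
Proof. by move=> bf; rewrite -[_ *: _]addr0 blfL // blf0 // addr0. Qed.

Lemma blfP f M : (forall a x y, f (a *: x + y) = a * f x + f y) ->
  (forall x, cabs (f x) <= M * nrm x) -> blf f.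
Proof. by move=> fL fM; split=> [a x y _ _|]; [apply: fL | exists M]. Qed.

Lemma blf_comb f g a : blf f -> blf g -> blf (fun x => a * f x + g x).
Proof.
move=> bf bg; have [_ [M1 fM]] := bf; have [_ [M2 gM]] := bg.
apply: (@blfP _ (cabs a * M1 + M2)) => [b x y|x]; first by rewrite !blfL //; ring.
apply: le_trans (cabsD _ _) _; rewrite cabsM mulrDl -mulrA.
by apply: lerD; [apply: ler_wpM2l; [apply: cabs_ge0 | apply: fM] | apply: gM].
Qed.

Lemma cabs_le_dnorm f x : blf f -> cabs (f x) <= dnorm f * nrm x.
Proof.
move=> bf; have [_ [M fM]] := bf; have [nx0|nx_neq0] := eqVneq (nrm x) 0.
  by rewrite nx0 mulr0 -(mulr0 M) -nx0 fM.
have nx_gt0 : 0 < nrm x by rewrite lt_def nx_neq0 nrm_ge0.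
have := @cabs_le_dual_norm _ (spaceA nrm) f ((nrm x)^-1%:C *: x) M fM.
have nxV_ge0 : 0 <= (nrm x)^-1 by rewrite invr_ge0 nrm_ge0.
rewrite /= nrmZ blfZ // !cabsM cabsR // mulVf // ler_pdivrMl // mulrC.
by apply=> //= y _; apply: nrm_ge0.
Qed.

Lemma dnorm_le f s : 0 <= s -> (forall x, cabs (f x) <= s * nrm x) -> dnorm f <= s.
Proof.
move=> s0 fs; apply: (@dual_norm_le _ (spaceA nrm) _ 0) => //=; first by rewrite nrm0.
by move=> y _ y1; apply: le_trans (fs y) _; rewrite -[leRHS]mulr1 ler_wpM2l.
Qed.

Lemma canon_in_bidual x : in_bidual nrm (Defs.canon (X := spaceA nrm) x).
Proof.
split=> [a f g bf bg //|]; exists (nrm x) => f bf.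
by rewrite /Defs.canon mulrC; apply: cabs_le_dnorm.
Qed.

Lemma bidualL eta f g a : in_bidual nrm eta -> blf f -> blf g ->
  eta (fun x => a * f x + g x) = a * eta f + eta g.
Proof. by case=> etaL _; apply: etaL. Qed.

Lemma blf_zero : blf (fun=> 0).
Proof. by apply: (@blfP _ 0) => [a x y|x]; rewrite ?cabs0 ?mul0r ?mulr0 ?addr0. Qed.

Lemma bidual0 eta : in_bidual nrm eta -> eta (fun=> 0) = 0.
Proof.
move=> eb; apply: (addrI (eta (fun=> 0))); rewrite addr0 -[X in X + _]mul1r.
by rewrite -(bidualL 1 eb blf_zero blf_zero); congr eta; apply: funext => x; rewrite mulr0 addr0.
Qed.

Lemma blf_scale f a : blf f -> blf (fun x => a * f x).
Proof.
move=> bf; have := blf_comb a bf blf_zero.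
by congr is_blf; apply: funext => x; rewrite addr0.
Qed.

Lemma bidualZ eta f a : in_bidual nrm eta -> blf f ->
  eta (fun x => a * f x) = a * eta f.
Proof.
move=> eb bf; rewrite -[RHS]addr0 -(bidual0 eb) -(bidualL a eb bf blf_zero).
by congr eta; apply: funext => x; rewrite addr0.
Qed.

Lemma blf_sum (I : Type) (r : seq I) (c : I -> R[i]) (g : I -> V -> R[i]) :
  (forall i, blf (g i)) ->
  blf (fun x => \sum_(i <- r) c i * g i x) /\
  forall eta, in_bidual nrm eta ->
    eta (fun x => \sum_(i <- r) c i * g i x) = \sum_(i <- r) c i * eta (g i).
Proof.
move=> bg; elim: r => [|j r [bs etas]].
  have -> : (fun x => \sum_(i <- [::]) c i * g i x) = fun=> 0.
    by apply: funext => x; rewrite big_nil.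
  by split=> [|eta eb]; [exact: blf_zero | rewrite big_nil bidual0].
have -> : (fun x => \sum_(i <- j :: r) c i * g i x) =
    fun x => c j * g j x + \sum_(i <- r) c i * g i x.
  by apply: funext => x; rewrite big_cons.
split=> [|eta eb]; first exact: blf_comb.
by rewrite bidualL // big_cons etas.
Qed.

Lemma dnorm_ge0 f : blf f -> 0 <= dnorm f.
Proof.
case=> _ [M fM]; apply: le_trans (cabs_ge0 (f 0)) _.
by apply: (@cabs_le_dual_norm _ (spaceA nrm) _ _ M fM) => //=; rewrite ?nrm0.
Qed.

Lemma cabs_le_bidual_norm eta f : in_bidual nrm eta -> blf f -> dnorm f <= 1 ->
  cabs (eta f) <= bidual_norm nrm eta.
Proof.
case=> _ [M etaM] bf f1.
by apply: (@cabs_le_dual_norm _ (Adual nrm) _ _ M etaM) => // g bg; apply: dnorm_ge0.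
Qed.

Lemma cabs_bidual_le eta f s : in_bidual nrm eta -> blf f -> 0 <= s ->
  (forall x, cabs (f x) <= s * nrm x) -> cabs (eta f) <= bidual_norm nrm eta * s.
Proof.
move=> eb bf; rewrite le_eqVlt => /predU1P[<-|s_gt0] fs.
  have -> : f = fun=> 0.
    by apply: funext => x; apply: cabs_le0; have := fs x; rewrite mul0r.
  by rewrite bidual0 // cabs0 mulr0.
have sV_ge0 : 0 <= s^-1 by rewrite invr_ge0 ltW.
have := cabs_le_bidual_norm eb (blf_scale s^-1%:C bf); rewrite bidualZ //.
rewrite cabsM cabsR // ler_pdivrMl // mulrC; apply; apply: dnorm_le => // x.
by rewrite cabsM cabsR // ler_pdivrMl // mul1r fs.
Qed.

Definition wstar_adherent S eta :=
  forall (n : nat) (fs : 'I_n -> V -> R[i]) (eps : R),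
    (forall i, blf (fs i)) -> 0 < eps ->
    exists x, S x /\ forall i, cabs (eta (fs i) - fs i x) < eps.

Lemma wstar_adherent_fin S eta (I : finType) (fs : I -> V -> R[i]) eps :
  wstar_adherent S eta -> (forall i, blf (fs i)) -> 0 < eps ->
  exists x, S x /\ forall i, cabs (eta (fs i) - fs i x) < eps.
Proof.
move=> ad bfs eps0.
have [x [Sx hx]] := ad #|I| (fun j => fs (enum_val j)) eps (fun j => bfs _) eps0.
by exists x; split=> // i; have := hx (enum_rank i); rewrite /= enum_rankK.
Qed.

Lemma wstar_adherent_cre_le S eta g s : wstar_adherent S eta -> blf g ->
  (forall x, S x -> cre (g x) <= s) -> cre (eta g) <= s.
Proof.
move=> ad bg gs; rewrite leNgt; apply/negP => sg.
have eps0 : 0 < cre (eta g) - s by rewrite subr_gt0.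
have [x [Sx /(_ ord0) hx]] := ad 1 (fun=> g) _ (fun=> bg) eps0.
have := cre_le_cabs (eta g - g x); rewrite creD creN.
by have := gs x Sx; lra.
Qed.

Lemma convex_ball_of_cone S : real_cone S -> convex_set (fun x => S x /\ nrm x <= 1).
Proof.
case=> _ SD SZ x1 x2 l /andP[l0 l1] [S1 n1] [S2 n2].
have l0' : 0 <= 1 - l by rewrite subr_ge0.
split; first by apply: SD; apply: SZ.
apply: le_trans (nrmD _ _) _; rewrite !nrmZ !cabsR //.
by have := ler_wpM2l l0 n1; have := ler_wpM2l l0' n2; lra.
Qed.

Lemma cone_cre_le_norm S f s : real_cone S -> blf f ->
  (forall x, S x -> nrm x <= 1 -> cre (f x) <= s) ->
  forall x, S x -> cre (f x) <= s * nrm x.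
Proof.
move=> [_ _ SZ] bf fs x Sx; have [nx0|nx_neq0] := eqVneq (nrm x) 0.
  apply: le_trans (cre_le_cabs _) _; apply: le_trans (cabs_le_dnorm x bf) _.
  by rewrite nx0 !mulr0.
have nx_gt0 : 0 < nrm x by rewrite lt_def nx_neq0 nrm_ge0.
have nxV_ge0 : 0 <= (nrm x)^-1 by rewrite invr_ge0 nrm_ge0.
have := fs _ (SZ _ _ nxV_ge0 Sx); rewrite nrmZ cabsR // mulVf // lexx blfZ // creMr.
by rewrite ler_pdivrMl // mulrC; apply.
Qed.

Lemma bidual_cre_le S eta f s : real_cone S -> wstar_adherent S eta ->
  in_bidual nrm eta -> bidual_norm nrm eta <= 1 -> blf f ->
  (forall x, S x -> nrm x <= 1 -> cre (f x) <= s) -> cre (eta f) <= s.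
Proof.
move=> cS ad eb eta1 bf fs; have [S0 SD SZ] := cS.
have s0 : 0 <= s by have := fs 0 S0; rewrite nrm0 ler01 blf0 // => /(_ isT).
have sN : sublinear (fun x => s * nrm x).
  split=> [x y|t x t0]; first by rewrite -mulrDr ler_wpM2l.
  by rewrite nrmZ cabsR // mulrCA.
pose Q c r := S c /\ r = cre (f c).
have cQ : real_cone_rel Q.
  split; first by split; rewrite ?blf0.
    move=> c1 _ c2 _ [S1 ->] [S2 ->]; split; first exact: SD.
    by rewrite blfD // creD.
  by move=> t c _ t0 [Sc ->]; split; [exact: SZ | rewrite blfZ // creMr].
have QN c r : Q c r -> r <= s * nrm c.
  by case=> Sc ->; apply: (cone_cre_le_norm cS bf fs).
(* split f = (f - h) + h with Re (f - h) <= 0 on S and |h| <= s nrm: density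
   controls eta (f - h), and the norm of eta controls eta h *)
have [psi [lpsi psiN psiQ]] := hahn_banach_cone sN cQ QN.
have [h [hL hRe hs]] := complexify nrmZ lpsi psiN.
have bh : blf h := blfP hL hs.
have := wstar_adherent_cre_le (s := 0) ad (blf_comb (-1) bh bf).
rewrite bidualL // creD mulN1r creN => /(_ _) hle.
have := cabs_bidual_le eb bh s0 hs; have := cre_le_cabs (eta h).
suff : - cre (eta h) + cre (eta f) <= 0.
  by have := ler_wpM2r s0 eta1; rewrite mul1r; lra.
apply: hle => x Sx; rewrite mulN1r creD creN hRe addrC subr_le0.
exact: psiQ.
Qed.

Lemma wstar_separation S eta : convex_set S -> in_bidual nrm eta ->
  ~ wstar_adherent S eta ->
  exists f (eps : R), [/\ blf f, 0 < eps & forall x, S x -> cre (f x) + eps <= cre (eta f)].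
Proof.
move=> cS eb /existsNP[n /existsNP[fs /existsNP[eps /not_implyP[bfs /not_implyP[eps0 nad]]]]].
pose gap x : {ffun 'I_n -> R[i]^o} := [ffun i => eta (fs i) - fs i x].
have gapA : real_affine gap.
  move=> x1 x2 l; apply/ffunP => i; rewrite !ffunE blfL ?blfZ //= /GRing.scale /=.
  by rewrite rmorphB rmorph1; ring.
have gap_eps x : S x -> exists i, eps <= cabs (gap x i).
  move=> Sx; apply: contrapT => nle; apply: nad; exists x; split=> // i.
  by rewrite ltNge; apply/negP => hi; apply: nle; exists i; rewrite ffunE.
have [h [hL _ hK]] :=
  ffun_separation_image (W := R[i]^o) (@cabsD R) (@cabsM R) cS gapA gap_eps.
have h0 i : h i 0 = 0.
  by apply: (addrI (h i 0)); have := hL i 1 0 0; rewrite scaler0 !addr0 mul1r.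
have hE i z : h i z = z * h i 1.
  have := hL i z 1 0; rewrite h0 !addr0 => <-.
  by congr (h i); rewrite /GRing.scale /= mulr1.
have [bf etaf] := blf_sum (index_enum 'I_n) (fun i => h i 1) bfs.
exists (fun x => \sum_i h i 1 * fs i x), eps; split=> // x Sx.
have -> : \sum_i h i 1 * fs i x = \sum_i h i 1 * eta (fs i) - \sum_i h i (gap x i).
  apply/esym/eqP; rewrite subr_eq -big_split; apply/eqP/eq_bigr => i _ /=.
  by rewrite ffunE (hE i (_ - _)) mulrBl !(mulrC _ (h i 1)) addrC subrK.
by have := hK x Sx; rewrite etaf // creD creN; lra.
Qed.

Theorem wstar_dense_ball S (T : ns_car (Abidual nrm) -> Prop) :
  real_cone S -> (forall eta, T eta -> in_bidual nrm eta) ->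
  wstar_dense_in nrm S T ->
  wstar_dense_in nrm (fun x => S x /\ nrm x <= 1)
    (fun eta => T eta /\ bidual_norm nrm eta <= 1).
Proof.
move=> cS Tb dST eta [Teta eta1].
apply: contrapT => /(wstar_separation (convex_ball_of_cone cS) (Tb _ Teta)).
move=> [f [eps [bf eps0 sep]]].
have eta_le := bidual_cre_le (s := cre (eta f) - eps) cS (dST _ Teta) (Tb _ Teta) eta1 bf.
suff /eta_le : forall x, S x -> nrm x <= 1 -> cre (f x) <= cre (eta f) - eps by lra.
by move=> x Sx nx; rewrite lerBrDr; apply: sep.
Qed.

Definition bounded_op (L : V -> V) :=
  (forall a x y, L (a *: x + y) = a *: L x + L y) /\
  exists M, forall x, nrm (L x) <= M * nrm x.

Lemma bounded_opZ L a x : bounded_op L -> L (a *: x) = a *: L x.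
Proof.
case=> LL _; have L0 : L 0 = 0.
  by apply: (addrI (L 0)); have := LL 1 0 0; rewrite !scale1r !addr0 => <-.
by rewrite -[a *: x]addr0 LL L0 addr0.
Qed.

(* a form of Mazur's lemma *)
Theorem wstar_adherent_norm_approx S E (I : finType) (L : I -> V -> V) (a : I -> V) d :
  convex_set S -> wstar_adherent S E -> (forall i, bounded_op (L i)) ->
  (forall i h, blf h -> E (fun x => h (L i x)) = h (a i)) -> 0 < d ->
  exists x, S x /\ forall i, nrm (L i x - a i) < d.
Proof.
move=> cS ad bL EL d0; apply: contrapT => nox.
pose res x : {ffun I -> V} := [ffun i => L i x - a i].
have resA : real_affine res.
  move=> x1 x2 l; apply/ffunP => i.
  rewrite !ffunE (bL i).1 (bounded_opZ _ _ (bL i)) !scalerBr addrACA.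
  by rewrite -opprD -scalerDl -rmorphD [l + _]addrC subrK rmorph1 scale1r.
have res_d x : S x -> exists i, d <= nrm (res x i).
  move=> Sx; apply: contrapT => nle; apply: nox; exists x; split=> // i.
  by rewrite ltNge; apply/negP => hi; apply: nle; exists i; rewrite ffunE.
have [h [hL hb hK]] := ffun_separation_image nrmD nrmZ cS resA res_d.
have bG i : blf (fun x => h i (L i x)).
  have [Li [M LM]] := bL i.
  apply: (@blfP _ M) => [b x y|x]; first by rewrite Li hL.
  by apply: le_trans (hb _ _) (LM x).
pose eps := d / (#|I|%:R + 1).
have eps0 : 0 < eps by rewrite divr_gt0 // ltr_wpDl.
have [x [Sx hx]] := wstar_adherent_fin ad bG eps0.
have := hK x Sx; rewrite cre_sum.
have hB i u v : h i (u - v) = h i u - h i v.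
  by rewrite -scaleN1r addrC hL mulN1r addrC.
have : \sum_i cre (h i (res x i)) <= \sum_(i : I) eps.
  apply: ler_sum => i _.
  have bh : blf (h i) by apply: (@blfP _ 1) => // y; rewrite mul1r.
  rewrite ffunE hB -(EL i (h i) bh).
  by apply: le_trans (cre_le_cabs _) _; rewrite -cabsN opprB ltW.
rewrite sumr_const (_ : #|xpredT| = #|I|) // -mulr_natr /eps mulrAC.
rewrite ler_pdivlMr ?ltr_wpDl // mulrDr mulr1 => hs hd.
by have := ler_wpM2r (ler0n R #|I|) hd; lra.
Qed.

End WeakStarDensity.

Arguments wstar_adherent {R V} nrm S eta.

Section NumericalRange.
Variables (R : realType) (X : nspace R) (one : ns_car X).
Implicit Types (x y : ns_car X) (t : R).

Lemma rset_comb t x y : 0 <= t -> rset one x -> rset one y ->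
  ns_in (ns_add (ns_scale t%:C x) y) -> rset one (ns_add (ns_scale t%:C x) y).
Proof.
move=> t0 [xX hx] [yX hy] sX; split=> // f sf; have [[fL _] _ _] := sf.
rewrite fL // creD creMr.
by apply: addr_ge0; [apply: mulr_ge0 => //; apply: hx | apply: hy].
Qed.

Lemma rset_cancel x : ns_in x -> ns_in (ns_add (ns_scale (-1) x) x) ->
  rset one (ns_add (ns_scale (-1) x) x).
Proof. by move=> xX sX; split=> // f [[fL _] _ _]; rewrite fL // mulN1r addNr. Qed.

End NumericalRange.

Section RealPositiveCone.
Variables (R : realType) (V : lmodType R[i]) (mul : V -> V -> V) (nrm : V -> R).

Lemma rA_real_cone : real_cone (rA mul nrm).
Proof.
have comb t x y : 0 <= t -> rA mul nrm x -> rA mul nrm y ->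
    rA mul nrm (t%:C *: x + y).
  move=> t0 [x1 x2] [y1 y2]; split=> [u uid|nu].
    exact: (rset_comb (X := spaceA nrm) t0 (x1 u uid) (y1 u uid)).
  have -> : A1_incl (t%:C *: x + y) =
      ns_add (ns_scale (n := spaceA1 mul nrm) t%:C (A1_incl x)) (A1_incl y).
    by rewrite /A1_incl /= mulr0 addr0.
  exact: (rset_comb t0 (x2 nu) (y2 nu)).
have rA0 : rA mul nrm 0.
  split=> [u _|_].
    have -> : 0 = ns_add (ns_scale (n := spaceA nrm) (-1) 0) 0.
      by rewrite /= scaler0 addr0.
    exact: rset_cancel.
  have -> : A1_incl 0 =
      ns_add (ns_scale (n := spaceA1 mul nrm) (-1) (A1_incl 0)) (A1_incl 0).
    by rewrite /A1_incl /= scaler0 mulr0 !addr0.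
  exact: rset_cancel.
split=> // [x y rx ry|t x t0 rx].
  by have := comb 1 x y ler01 rx ry; rewrite rmorph1 scale1r.
by have := comb t x 0 t0 rx rA0; rewrite addr0.
Qed.

End RealPositiveCone.

Section ApproximateIdentities.
Variables (R : realType) (V : lmodType R[i]) (mul : V -> V -> V) (nrm : V -> R).

Lemma has_cai_in_of_approx_units (P : V -> Prop) :
  (forall (F : seq V) d, 0 < d -> exists x, [/\ P x, nrm x <= 1 &
     forall a, a \in F -> nrm (mul x a - a) < d /\ nrm (mul a x - a) < d]) ->
  has_cai_in mul nrm P.
Proof.
move=> units.
(* the net is indexed by finite subsets of A and tolerances, ordered by refinement *)
pose I := {p : seq V * R | 0 < p.2}.
have [e eP] := choice (fun i : I => units (sval i).1 (sval i).2 (svalP i)).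
pose le (i j : I) := {subset (sval i).1 <= (sval j).1} /\ (sval j).2 <= (sval i).2.
exists I, le, e; split.
- split=> [|i|i j k [ij dij] [jk djk]|i j].
  + exact: (inhabits (exist _ ([::], 1) ltr01)).
  + by split.
  + by split=> [a /ij /jk|]; last exact: le_trans djk dij.
  + have p : 0 < Order.min (sval i).2 (sval j).2 by rewrite lt_min (svalP i) (svalP j).
    exists (exist _ ((sval i).1 ++ (sval j).1, Order.min (sval i).2 (sval j).2) p).
    split; split=> /=.
    * by move=> a ai; rewrite mem_cat ai.
    * by rewrite ge_min lexx.
    * by move=> a aj; rewrite mem_cat aj orbT.
    * by rewrite ge_min lexx orbT.
- by move=> i; case: (eP i).
move=> a; split=> eps eps0; exists (exist _ ([:: a], eps) eps0) => i [/= aF di];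
  have [_ _ /(_ a (aF a (mem_head _ _))) [ha1 ha2]] := eP i.
- exact: lt_le_trans ha1 di.
- exact: lt_le_trans ha2 di.
Qed.

End ApproximateIdentities.

Section BanachAlgebra.
Variables (R : realType) (V : lmodType R[i]) (mul : V -> V -> V) (nrm : V -> R).
Hypothesis hBA : is_banach_algebra mul nrm.

Local Notation blf f := (is_blf (X := spaceA nrm) f).

Lemma banach_nrmD x y : nrm (x + y) <= nrm x + nrm y.
Proof. by case: hBA => _ [_ [_ [_ [_ [nD _]]]]]. Qed.

Lemma banach_nrmZ a x : nrm (a *: x) = cabs a * nrm x.
Proof. by case: hBA => _ [_ [_ [_ [_ [_ [nZ _]]]]]]. Qed.

Lemma mull_bounded_op a : bounded_op nrm (mul a).
Proof.
have [_ [_ [mDr [_ [_ [_ [_ [nM _]]]]]]]] := hBA.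
by split=> [c x y|]; [exact: mDr | exists (nrm a) => x; exact: nM].
Qed.

Lemma mulr_bounded_op a : bounded_op nrm (mul^~ a).
Proof.
have [_ [mDl [_ [_ [_ [_ [_ [nM _]]]]]]]] := hBA.
by split=> [c x y|]; [exact: mDl | exists (nrm a) => x; rewrite mulrC nM].
Qed.

Lemma mixed_identity_mull E a h : mixed_identity mul nrm E -> blf h ->
  E (fun b => h (mul a b)) = h a.
Proof.
case=> _ mixE bh.
exact: (mixE _ (canon_in_bidual banach_nrmD banach_nrmZ a) _ bh).1.
Qed.

Lemma mixed_identity_mulr E a h : mixed_identity mul nrm E -> blf h ->
  E (fun b => h (mul b a)) = h a.
Proof.
case=> _ mixE bh.
exact: (mixE _ (canon_in_bidual banach_nrmD banach_nrmZ a) _ bh).2.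
Qed.

Theorem approx_units_of_mixed_identity S E (F : seq V) d :
  convex_set S -> wstar_adherent nrm S E -> mixed_identity mul nrm E -> 0 < d ->
  exists x, S x /\ forall a, a \in F -> nrm (mul x a - a) < d /\ nrm (mul a x - a) < d.
Proof.
move=> cS adE mixE d0.
pose L (i : bool * 'I_(size F)) :=
  if i.1 then mul^~ (nth 0 F i.2) else mul (nth 0 F i.2).
have bL i : bounded_op nrm (L i).
  by rewrite /L; case: i.1; [exact: mulr_bounded_op | exact: mull_bounded_op].
have EL i h : blf h -> E (fun x => h (L i x)) = h (nth 0 F i.2).
  rewrite /L; case: i.1 => bh; [exact: mixed_identity_mulr | exact: mixed_identity_mull].
have [x [Sx hx]] :=
  wstar_adherent_norm_approx banach_nrmD banach_nrmZ cS adE bL EL d0.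
exists x; split=> // a aF.
have aF' : (index a F < size F)%N by rewrite index_mem.
have := hx (true, Ordinal aF'); have := hx (false, Ordinal aF').
by rewrite /L /= nth_index.
Qed.

End BanachAlgebra.

Theorem proposition6p4 (R : realType) (V : lmodType R[i])
    (mul : V -> V -> V) (nrm : V -> R) :
  is_banach_algebra mul nrm ->
  approx_unital mul nrm ->
  wstar_dense_in nrm (rA mul nrm) (rA2 mul nrm) ->
  wstar_dense_in nrm (fun x => rA mul nrm x /\ nrm x <= 1)
                 (fun eta => rA2 mul nrm eta /\ bidual_norm nrm eta <= 1) /\
  ((exists E, [/\ mixed_identity mul nrm E, bidual_norm nrm E = 1
                & rA2 mul nrm E]) ->
   has_cai_in mul nrm (rA mul nrm)).
Proof.
move=> hBA _ dense_rA.
have nrmD := banach_nrmD hBA; have nrmZ := banach_nrmZ hBA.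
have cone_rA := rA_real_cone mul nrm.
have dense_ball := wstar_dense_ball nrmD nrmZ cone_rA
  (fun eta (r : rA2 mul nrm eta) => r.1) dense_rA.
split=> // -[E [mixE E1 rE]].
have adE : wstar_adherent nrm (fun x => rA mul nrm x /\ nrm x <= 1) E.
  by apply: dense_ball; rewrite E1.
apply: has_cai_in_of_approx_units => F d d0.
have [x [[rx nx] hx]] :=
  approx_units_of_mixed_identity hBA F (convex_ball_of_cone nrmD nrmZ cone_rA) adE mixE d0.
by exists x.
Qed.
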